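(* Consider the vector adoption–opinion model described in the context, with initial opinion vector $x(0)\in[0,1]^n$ treated as a fixed parameter, and suppose Assumptions 1 and 2 (stated in the context) hold. Let $x^*=(I-\Lambda\tilde W)^{-1}(I-\Lambda-\Xi)x(0)$ and $d^*=\Psi(x^* )\mathbf 1$. Then $(\mathbf 0,d^*,x^* )$ is an equilibrium (fixed point) of the map defining the model.
   Context: Let $n\ge1$, $\mathcal V=\{1,\dots,n\}$, $W,\tilde W\in\mathbb R_+^{n\times n}$ nonnegative, and for each $i$: $\beta_i,\gamma_i,\theta_i,\delta_i\in[0,1]$, $\alpha_i,\lambda_i,\xi_i\ge0$ with $\alpha_i+\lambda_i+\xi_i=1$. Let $B=\mathrm{diag}(\beta)$, $\Gamma=\mathrm{diag}(\gamma)$, $\Theta=\mathrm{diag}(\theta)$, $\Delta=\mathrm{diag}(\delta)$, $\Lambda=\mathrm{diag}(\lambda)$, $\Xi=\mathrm{diag}(\xi)$. The vector adoption–opinion model on the state $(a,d,x)\in([0,1]^n)^3$ is $a(t+1)=a(t)+B\,\mathrm{diag}(x(t))\,\mathrm{diag}(\mathbf 1-a(t)-d(t))\,W a(t)-\Delta a(t)$, $d(t+1)=d(t)-\Gamma\,\mathrm{diag}(x(t))d(t)+\Delta a(t)+\Theta(I-\mathrm{diag}(x(t)))(\mathbf 1-a(t)-d(t))$, $x(t+1)=(I-\Lambda-\Xi)x(0)+\Lambda\tilde W x(t)+\Xi W a(t)$, where $x(0)$ is the (fixed) initial opinion vector. Define $\Psi(x):=\big((\Gamma-\Theta)\mathrm{diag}(x)+\Theta\big)^{-1}\Theta(I-\mathrm{diag}(x))$.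 Assumption 1: $W$ and $\tilde W$ are row-stochastic and irreducible, and $\gamma_i+\theta_i\in(0,1)$ for all $i$. Assumption 2: letting $\tilde{\mathcal G}$ be the directed graph on $\mathcal V$ with an edge $(i,j)$ iff $\tilde W_{ij}>0$, for every $i\in\mathcal V$ there is a path in $\tilde{\mathcal G}$ from $i$ to some $j$ with $\alpha_j=1-\lambda_j-\xi_j>0$. *)

From HB Require Import structures.
From mathcomp Require Import all_boot all_order all_algebra.
Set Implicit Arguments. Unset Strict Implicit. Unset Printing Implicit Defensive.
Import Order.TTheory GRing.Theory Num.Theory.
Local Open Scope ring_scope.

Section Model.
Variables (R : realFieldType) (n : nat).

Definition dg (v : 'I_n -> R) : 'M[R]_n := diag_mx (\row_i v i).
Definition dgc (x : 'cV[R]_n) : 'M[R]_n := diag_mx x^T.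

Definition ones : 'cV[R]_n := const_mx 1.

Definition row_stochastic (W : 'M[R]_n) : Prop :=
  (forall i j, 0 <= W i j) /\ (forall i, \sum_j W i j = 1).

Definition mx_graph (A : 'M[R]_n) : rel 'I_n := fun i j => 0 < A i j.

Definition irreducible_mx (A : 'M[R]_n) : Prop :=
  forall i j, connect (mx_graph A) i j.

Definition Psi_den (gamma theta : 'I_n -> R) (x : 'cV[R]_n) : 'M[R]_n :=
  (dg gamma - dg theta) *m dgc x + dg theta.
Definition Psi (gamma theta : 'I_n -> R) (x : 'cV[R]_n) : 'M[R]_n :=
  invmx (Psi_den gamma theta x) *m dg theta *m (1%:M - dgc x).

Definition model_step (W Wt : 'M[R]_n)
    (beta gamma theta delta lambda xi : 'I_n -> R) (x0 : 'cV[R]_n)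
    (s : 'cV[R]_n * 'cV[R]_n * 'cV[R]_n) : 'cV[R]_n * 'cV[R]_n * 'cV[R]_n :=
  let: (a, d, x) := s in
  (a + dg beta *m dgc x *m dgc (ones - a - d) *m W *m a - dg delta *m a,
   d - dg gamma *m dgc x *m d + dg delta *m a
     + dg theta *m (1%:M - dgc x) *m (ones - a - d),
   (1%:M - dg lambda - dg xi) *m x0 + dg lambda *m Wt *m x + dg xi *m W *m a).

End Model.
Arguments ones {R n}.

From HB Require Import structures.
From mathcomp Require Import all_boot all_order all_algebra.
From mathcomp Require Import lra.
Import Order.TTheory GRing.Theory Num.Theory.
Local Open Scope ring_scope.

(* With a = 0 the adoption equation is at rest, and the other two equations
   are linear in x and d respectively: xstar is the fixed point of
   x |-> (I - Lambda - Xi) x(0) + Lambda Wt x, and dstar = Psi(xstar) 1 solves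
   Gamma diag(xstar) d = Theta (I - diag(xstar)) (1 - d).  The real content is
   the invertibility of I - Lambda Wt, by a discrete maximum principle: a
   solution of v = Lambda Wt v attains max |v_k| on every node reachable from a
   maximiser, and such nodes have lambda = 1, whereas Assumption 2 provides a
   reachable node with lambda < 1. *)

Lemma connect_invariant (T : finType) (e : rel T) (P : pred T) x y :
  (forall u v, e u v -> P u -> P v) -> connect e x y -> P x -> P y.
Proof.
move=> inv_P /connectP [p e_p ->].
elim: p x e_p => //= z p IHp x /andP [e_xz z_p] Px.
exact: IHp z_p (inv_P _ _ e_xz Px).
Qed.

Section StochasticMaximumPrinciple.
Context {R : realFieldType} {n : nat} {A : 'M[R]_n}.
Hypothesis A_stoch : row_stochastic A.

Lemma row_stochastic_avg_le (F : 'I_n -> R) (M : R) k :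
  (forall l, F l <= M) -> \sum_l A k l * F l <= M.
Proof.
have [A_ge0 A_sum] := A_stoch; move=> F_le.
apply: le_trans (_ : \sum_l A k l * M <= M).
  by apply: ler_sum => l _; rewrite ler_wpM2l.
by rewrite -mulr_suml A_sum mul1r.
Qed.

Lemma row_stochastic_avg_max (F : 'I_n -> R) (M : R) k l :
  (forall l, F l <= M) -> M <= \sum_l A k l * F l -> mx_graph A k l -> F l = M.
Proof.
have [A_ge0 A_sum] := A_stoch; move=> F_le avg_ge Akl_gt0.
have gap_ge0 l' : 0 <= A k l' * (M - F l') by rewrite mulr_ge0 // subr_ge0.
have gap_sum0 : \sum_l' A k l' * (M - F l') = 0.
  apply/eqP; rewrite eq_le sumr_ge0 // andbT.
  under eq_bigr => l' _ do rewrite mulrBr.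
  by rewrite sumrB -mulr_suml A_sum mul1r subr_le0.
have /eqP : A k l * (M - F l) = 0 :=
  psumr_eq0P (fun l' _ => gap_ge0 l') gap_sum0 (isT : xpredT l).
by rewrite mulf_eq0 gt_eqF //= subr_eq0 => /eqP.
Qed.

Context {lambda : 'I_n -> R}.
Hypothesis lambda01 : forall i, 0 <= lambda i <= 1.
Hypothesis reach_lambda_lt1 :
  forall i, exists2 j, connect (mx_graph A) i j & lambda j < 1.

Lemma dg_stochastic_fixpoint_eq0 (v : 'cV[R]_n) : dg lambda *m A *m v = v -> v = 0.
Proof.
move=> v_fix; apply/matrixP => i j; rewrite (ord1 j) mxE.
apply/eqP/negPn/negP => vi_neq0.
pose F k := `|v k 0|.
pose m := [arg max_(k > i) F k]%O.
have F_le k : F k <= F m by rewrite /m; case: arg_maxP => // l _; apply.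
have Fm_gt0 : 0 < F m by apply: lt_le_trans (F_le i); rewrite normr_gt0.
have vE k : v k 0 = lambda k * \sum_l A k l * v l 0.
  by rewrite -{1}v_fix -mulmxA mul_diag_mx !mxE mulr_sumr.
have max_step k : F k = F m -> lambda k = 1 /\ forall l, mx_graph A k l -> F l = F m.
  move=> Fk; have /andP [lk_ge0 lk_le1] := lambda01 k.
  have avg_le := row_stochastic_avg_le _ _ k F_le.
  have avg_ge : F m <= lambda k * \sum_l A k l * F l.
    rewrite -Fk /F vE normrM ger0_norm // ler_wpM2l //.
    apply: le_trans (ler_norm_sum _ _ _) _.
    by apply: ler_sum => l _; rewrite normrM ger0_norm //; case: A_stoch.
  have lk1 : lambda k = 1 by nra.
  rewrite lk1 mul1r in avg_ge.
  by split=> // l; apply: row_stochastic_avg_max F_le avg_ge.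
have [k m_k lk_lt1] := reach_lambda_lt1 m.
have Fk : F k = F m.
  have max_inv u w : mx_graph A u w -> F u == F m -> F w == F m.
    by move=> uw /eqP /max_step [_ /(_ w uw) ->].
  by apply/eqP; apply: (@connect_invariant _ _ (fun u => F u == F m) _ _ max_inv m_k).
by have [lk1 _] := max_step k Fk; rewrite lk1 ltxx in lk_lt1.
Qed.

Lemma unitmx_1_sub_dg_stochastic : 1%:M - dg lambda *m A \in unitmx.
Proof.
rewrite -unitmx_tr -row_free_unit; apply: inj_row_free => v v_ker.
apply: trmx_inj; rewrite trmx0; apply: dg_stochastic_fixpoint_eq0.
have : (1%:M - dg lambda *m A) *m v^T = 0.
  by rewrite -[LHS]trmxK trmx_mul trmxK v_ker trmx0.
by rewrite mulmxBl mul1mx => /eqP; rewrite subr_eq0 eq_sym => /eqP.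
Qed.

End StochasticMaximumPrinciple.

Lemma invmx_1_sub_fixpoint (R : comUnitRingType) (n : nat) (L : 'M[R]_n)
    (c : 'cV[R]_n) :
  1%:M - L \in unitmx -> c + L *m (invmx (1%:M - L) *m c) = invmx (1%:M - L) *m c.
Proof.
move=> unit_L; set y := invmx _ *m c.
have : (1%:M - L) *m y = c by rewrite mulKVmx.
by rewrite mulmxBl mul1mx => <-; rewrite subrK.
Qed.

Lemma Psi_ones_balance {R : realFieldType} {n : nat} {gamma theta : 'I_n -> R}
    {x : 'cV[R]_n} :
  Psi_den gamma theta x \in unitmx ->
  let d := Psi gamma theta x *m ones in
  dg gamma *m dgc x *m d = dg theta *m (1%:M - dgc x) *m (ones - d).
Proof.
move=> unit_den d.
have den_d : Psi_den gamma theta x *m d = dg theta *m (1%:M - dgc x) *m ones.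
  by rewrite /d /Psi -!mulmxA mulKVmx.
move: den_d; rewrite /Psi_den !mulmxBr mulmx1 !mulmxDl !mulNmx => <-.
by apply/matrixP => i j; rewrite !mxE; lra.
Qed.

Theorem proposition2 (R : realFieldType) (n : nat) (W Wt : 'M[R]_n)
    (beta gamma theta delta alpha lambda xi : 'I_n -> R) (x0 : 'cV[R]_n) :
  (* parameter ranges *)
  (forall i, 0 <= beta i <= 1) ->
  (forall i, 0 <= gamma i <= 1) ->
  (forall i, 0 <= theta i <= 1) ->
  (forall i, 0 <= delta i <= 1) ->
  (forall i, 0 <= alpha i) -> (forall i, 0 <= lambda i) -> (forall i, 0 <= xi i) ->
  (forall i, alpha i + lambda i + xi i = 1) ->
  (* initial opinions in [0,1]^n *)
  (forall i, 0 <= x0 i ord0 <= 1) ->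
  (* Assumption 1 *)
  row_stochastic W -> irreducible_mx W ->
  row_stochastic Wt -> irreducible_mx Wt ->
  (forall i, 0 < gamma i + theta i < 1) ->
  (* Assumption 2 *)
  (forall i, exists j, connect (mx_graph Wt) i j /\ 0 < alpha j) ->
  let xstar := invmx (1%:M - dg lambda *m Wt) *m ((1%:M - dg lambda - dg xi) *m x0) in
  (* Psi at xstar is well defined *)
  Psi_den gamma theta xstar \in unitmx ->
  let dstar := Psi gamma theta xstar *m ones in
  model_step W Wt beta gamma theta delta lambda xi x0 (0, dstar, xstar)
    = (0, dstar, xstar).
Proof.
move=> _ _ _ _ alpha_ge0 lambda_ge0 xi_ge0 weights_sum1 _ _ _ Wt_stoch _ _
  Wt_reach_alpha xstar unit_den dstar.
have lambda01 i : 0 <= lambda i <= 1.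
  rewrite lambda_ge0 /=.
  by have := weights_sum1 i; have := alpha_ge0 i; have := xi_ge0 i; lra.
have reach_lambda_lt1 i : exists2 j, connect (mx_graph Wt) i j & lambda j < 1.
  have [j [i_j alpha_gt0]] := Wt_reach_alpha i; exists j => //.
  by have := weights_sum1 j; have := xi_ge0 j; lra.
have unit_x := unitmx_1_sub_dg_stochastic Wt_stoch lambda01 reach_lambda_lt1.
rewrite /model_step !mulmx0 !addr0 !subr0 (Psi_ones_balance unit_den) subrK.
by rewrite /xstar invmx_1_sub_fixpoint.
Qed.
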